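(* For any $\beta>0$, $$\sum_{(m,n,p)\in\mathbb Z^3\setminus\{0\}} T(m,n,p)\,e^{-\beta R(m,n,p)}>0,$$ where $R(m,n,p)=m^2+n^2+p^2+mp+np$ and $T(m,n,p)=mn(m+p)(n+p)$. *)

From mathcomp Require Import all_boot all_order all_algebra.
From mathcomp Require Import all_classical all_reals all_analysis.
Set Implicit Arguments. Unset Strict Implicit. Unset Printing Implicit Defensive.
Import Order.TTheory GRing.Theory Num.Theory.
Local Open Scope ring_scope.

Definition Rq (m n p : int) : int := m ^+ 2 + n ^+ 2 + p ^+ 2 + m * p + n * p.

Definition Tq (m n p : int) : int := m * n * (m + p) * (n + p).

Definition zrange (N : nat) : seq int := [seq (i%:Z - N%:Z) | i <- iota 0 (N.*2.+1)].

Definition zbox (N : nat) : seq (int * int * int) :=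
  flatten [seq [seq (m, n, p) | p <- zrange N] | m <- zrange N, n <- zrange N].

Definition theta_partial (R : realType) (beta : R) (N : nat) : R :=
  \sum_(x <- zbox N | x != (0, 0, 0))
     (Tq x.1.1 x.1.2 x.2)%:~R * expR (- (beta * (Rq x.1.1 x.1.2 x.2)%:~R)).

From mathcomp Require Import all_boot all_order all_algebra.
From mathcomp Require Import all_classical all_reals all_analysis.
From mathcomp Require Import zify ring lra.
Set Implicit Arguments. Unset Strict Implicit. Unset Printing Implicit Defensive.
Import Order.TTheory GRing.Theory Num.Theory.
Import numFieldNormedType.Exports.
Local Open Scope ring_scope.

(* Let a(k) = k exp(-beta k^2 / 2) ([kgauss]).  Since
   2 R(m,n,p) = m^2 + n^2 + (m+p)^2 + (n+p)^2, the summand is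
   a(m) a(n) a(m+p) a(n+p); as sum_k |a(k)| <= 32 / beta^2, the triple sum
   converges absolutely, so the limit can also be computed along finite sets
   squeezed between two boxes.  Take m, n in [-K, K] and s = m + n + p in
   [-3K, 3K]: the summand becomes a(m) a(s-m) a(n) a(s-n), and the sum is
   sum_s c(s)^2 with c(s) = sum_m a(m) a(s-m).  As a is odd,
   c(0) = - sum_m a(m)^2 <= - a(1)^2, so the sum is at least a(1)^4 > 0. *)

Lemma big_uniq_subset (I : eqType) (V : nmodType) (s t : seq I) (F : I -> V) :
  uniq s -> uniq t -> {subset s <= t} ->
  \sum_(i <- s) F i = \sum_(i <- t | i \in s) F i.
Proof.
move=> s_uniq t_uniq sub_st; rewrite -[RHS]big_filter; apply: perm_big.
apply: uniq_perm => //; first exact: filter_uniq.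
by move=> i; rewrite mem_filter; case: (boolP (i \in s)) => // /sub_st ->.
Qed.

Lemma ler_sum_subset (I : eqType) (R : numDomainType) (s t : seq I) (F : I -> R) :
  uniq s -> uniq t -> {subset s <= t} -> (forall i, 0 <= F i) ->
  \sum_(i <- s) F i <= \sum_(i <- t) F i.
Proof.
move=> s_uniq t_uniq sub_st F_ge0.
rewrite (big_uniq_subset _ s_uniq t_uniq sub_st) [X in X <= _]big_mkcond.
by apply: ler_sum => i _; case: ifP.
Qed.

Section NestedSums.
Variables (R : realType) (T : eqType) (box : nat -> seq T) (f : T -> R).
Hypothesis box_uniq : forall N, uniq (box N).
Hypothesis box_nested : forall N M, (N <= M)%N -> {subset box N <= box M}.

Lemma sum_box_nondecreasing (g : T -> R) : (forall x, 0 <= g x) ->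
  nondecreasing_seq (fun N => \sum_(x <- box N) g x).
Proof. by move=> g_ge0 N M NM; apply: ler_sum_subset => //; apply: box_nested. Qed.

Lemma dist_sum_box_le N M (t : seq T) :
    uniq t -> {subset box N <= t} -> {subset t <= box M} ->
  `|\sum_(x <- box M) f x - \sum_(x <- t) f x|
    <= \sum_(x <- box M) `|f x| - \sum_(x <- box N) `|f x|.
Proof.
move=> t_uniq sub_Nt sub_tM; have sub_NM x (xN : x \in box N) := sub_tM x (sub_Nt x xN).
rewrite (big_uniq_subset _ t_uniq (box_uniq M) sub_tM).
rewrite (big_uniq_subset _ (box_uniq N) (box_uniq M) sub_NM).
rewrite [\sum_(i <- box M | i \in t) _]big_mkcond.
rewrite [\sum_(i <- box M | i \in box N) _]big_mkcond.
rewrite -!sumrB; apply: le_trans (ler_norm_sum _ _ _) _.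
apply: ler_sum => x _ /=; case: ifP => xt; case: ifP => xN.
- by rewrite !subrr normr0.
- by rewrite subrr normr0 subr0.
- by rewrite sub_Nt in xt.
- by rewrite !subr0.
Qed.

Lemma sum_box_abs_is_cvgn (B : R) : (forall N, \sum_(x <- box N) `|f x| <= B) ->
  cvgn (fun N => \sum_(x <- box N) `|f x|).
Proof.
move=> sum_le_B; apply: nondecreasing_is_cvgn; first exact: sum_box_nondecreasing.
by exists B => _ [N _ <-].
Qed.

Lemma sum_box_is_cvgn (B : R) : (forall N, \sum_(x <- box N) `|f x| <= B) ->
  cvgn (fun N => \sum_(x <- box N) f x).
Proof.
move=> sum_le_B; have f_le x : - `|f x| <= f x <= `|f x| by rewrite -ler_norml.
have dominated_cvgn (g : T -> R) : (forall x, 0 <= g x <= `|f x|) ->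
    cvgn (fun N => \sum_(x <- box N) g x).
  move=> g_bounds; apply: nondecreasing_is_cvgn.
    by apply: sum_box_nondecreasing => x; case/andP: (g_bounds x).
  exists B => _ [N _ <-]; apply: le_trans (sum_le_B N) => /=.
  by apply: ler_sum => x _; case/andP: (g_bounds x).
have -> : (fun N => \sum_(x <- box N) f x) = (fun N =>
    \sum_(x <- box N) ((`|f x| + f x) / 2) - \sum_(x <- box N) ((`|f x| - f x) / 2)).
  by apply: funext => N; rewrite -sumrB; apply: eq_bigr => x _; field.
by apply: is_cvgB; apply: dominated_cvgn => x;
  case/andP: (f_le x) => *; apply/andP; split; lra.
Qed.

End NestedSums.

Lemma mem_zrange N (x : int) : (x \in zrange N) = (- (N%:Z) <= x <= N%:Z).
Proof.
apply/mapP/idP => [[i] | /andP[x_ge x_le]].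
  by rewrite mem_iota add0n => /andP[_ i_lt] ->; apply/andP; split; lia.
by exists (absz (x + N%:Z)); [rewrite mem_iota add0n; apply/andP; split|]; lia.
Qed.

Lemma zrange_uniq N : uniq (zrange N).
Proof. by rewrite map_inj_uniq ?iota_uniq // => i j /=; lia. Qed.

Lemma perm_zrangeS N : perm_eq (zrange N.+1) (N.+1%:Z :: - N.+1%:Z :: zrange N).
Proof.
apply: uniq_perm; first exact: zrange_uniq.
  rewrite (cons_uniq N.+1%:Z) (cons_uniq (- N.+1%:Z)) zrange_uniq.
  by rewrite !mem_zrange in_cons mem_zrange andbT; apply/andP; split; lia.
by move=> x; rewrite mem_zrange in_cons in_cons mem_zrange; apply/idP/idP; lia.
Qed.

Lemma big_zrange_sym (V : nmodType) N (F : int -> V) :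
  \sum_(k <- zrange N) F k = F 0 + \sum_(1 <= n < N.+1) (F n%:Z + F (- n%:Z)).
Proof.
elim: N => [|N IH]; first by rewrite big_geq // addr0 (_ : zrange 0 = [:: 0]) // big_seq1.
rewrite (perm_big _ (perm_zrangeS N)) big_cons big_cons IH [in RHS]big_nat_recr //=.
by rewrite addrA addrC -addrA.
Qed.

Definition zcuboid (a b c : nat) : seq (int * int * int) :=
  flatten [seq [seq (m, n, p) | p <- zrange c] | m <- zrange a, n <- zrange b].

Lemma zcuboidE a b c : zcuboid a b c =
  [seq (mn, p) | mn <- [seq (m, n) | m <- zrange a, n <- zrange b], p <- zrange c].
Proof.
rewrite /zcuboid; move: (zrange b) (zrange c) => t u; elim: (zrange a) => //= m s IH.
by rewrite allpairs_cat flatten_cat IH allpairs_mapl.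
Qed.

Lemma mem_zcuboid a b c x : (x \in zcuboid a b c) =
  [&& x.1.1 \in zrange a, x.1.2 \in zrange b & x.2 \in zrange c].
Proof.
rewrite zcuboidE; case: x => [[m n] p]; apply/allpairsP/idP.
  by case=> [[[? ?] ?]] [/allpairsP[[? ?] [? ? [-> ->]]] ? [-> -> ->]]; apply/and3P.
case/and3P => m_in n_in p_in; exists (m, n, p); split => //.
by apply/allpairsP; exists (m, n).
Qed.

Lemma zcuboid_uniq a b c : uniq (zcuboid a b c).
Proof.
by rewrite zcuboidE !allpairs_uniq ?zrange_uniq //; move=> [? ?] [? ?] _ _ [-> ->].
Qed.

Lemma big_zcuboid (V : nmodType) a b c (F : int * int * int -> V) :
  \sum_(x <- zcuboid a b c) F x =
  \sum_(m <- zrange a) \sum_(n <- zrange b) \sum_(p <- zrange c) F (m, n, p).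
Proof. by rewrite zcuboidE !big_allpairs. Qed.

Lemma zboxE N : zbox N = zcuboid N N N. Proof. by []. Qed.

Lemma zbox_uniq N : uniq (zbox N). Proof. exact: zcuboid_uniq. Qed.

Lemma mem_zbox N x : (x \in zbox N) =
  [&& - (N%:Z) <= x.1.1 <= N%:Z, - (N%:Z) <= x.1.2 <= N%:Z & - (N%:Z) <= x.2 <= N%:Z].
Proof. by rewrite zboxE mem_zcuboid !mem_zrange. Qed.

Lemma zbox_nested N M : (N <= M)%N -> {subset zbox N <= zbox M}.
Proof. by move=> NM x; rewrite !mem_zbox; lia. Qed.

Definition shear_box (K : nat) : seq (int * int * int) :=
  [seq (x.1.1, x.1.2, x.2 - x.1.1 - x.1.2) | x <- zcuboid K K (3 * K)].

Lemma shear_box_uniq K : uniq (shear_box K).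
Proof.
rewrite map_inj_uniq ?zcuboid_uniq // => -[[m n] s] [[m' n'] s'] /= [-> -> e].
by congr (_, _, _); lia.
Qed.

Lemma mem_shear_box K x : (x \in shear_box K) =
  [&& - (K%:Z) <= x.1.1 <= K%:Z, - (K%:Z) <= x.1.2 <= K%:Z &
      - ((3 * K)%N%:Z) <= x.1.1 + x.1.2 + x.2 <= (3 * K)%N%:Z].
Proof.
apply/mapP/idP => [[[[m n] s]] | ].
  by rewrite mem_zcuboid !mem_zrange /= => + -> /=; lia.
case: x => [[m n] p] /= bounds; exists (m, n, m + n + p).
  by rewrite mem_zcuboid !mem_zrange /=; lia.
by rewrite /=; congr (_, _, _); lia.
Qed.

Lemma zbox_sub_shear_box K : {subset zbox K <= shear_box K}.
Proof. by move=> x; rewrite mem_zbox mem_shear_box; lia. Qed.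

Lemma shear_box_sub_zbox K : {subset shear_box K <= zbox (5 * K)}.
Proof. by move=> x; rewrite mem_zbox mem_shear_box; lia. Qed.

Lemma sqr_le_expR (R : realType) (x : R) : 0 <= x -> x ^+ 2 / 2 <= expR x.
Proof. by move=> x_ge0; apply: le_trans (expR_ge1Dxn 1 x_ge0); rewrite lerDr. Qed.

Lemma sum_le_of_quadratic_decay (R : realFieldType) (u : nat -> R) (D : R) L :
    (forall n, (0 < n)%N -> u n * (n%:R * n.+1%:R) <= D) ->
  \sum_(1 <= n < L.+1) u n <= D - D / L.+1%:R.
Proof.
move=> u_le; have -> : D - D / L.+1%:R = \sum_(1 <= n < L.+1) (- D / n.+1%:R - - D / n%:R).
  by rewrite telescope_sumr // divr1 mulNr opprK addrC.
apply: ler_sum_nat => n /andP[n_gt0 _].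
have n_pos : (0 : R) < n%:R by rewrite ltr0n.
have := u_le n n_gt0; rewrite -ler_pdivlMr ?mulr_gt0 ?ltr0n // => /le_trans; apply.
rewrite [X in _ <= X](_ : _ = D / (n%:R * n.+1%:R)) //.
by field; rewrite !gt_eqF ?addr_gt0.
Qed.

Section KGauss.
Variables (R : realType) (beta : R).

Definition kgauss (k : int) : R := k%:~R * expR (- (beta / 2 * (k ^+ 2)%:~R)).

Lemma kgauss0 : kgauss 0 = 0. Proof. by rewrite /kgauss mul0r. Qed.

Lemma kgaussN k : kgauss (- k) = - kgauss k.
Proof. by rewrite /kgauss sqrrN rmorphN mulNr. Qed.

Lemma kgauss1_gt0 : 0 < kgauss 1.
Proof. by rewrite /kgauss mul1r expR_gt0. Qed.

Definition theta_term (x : int * int * int) : R :=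
  kgauss x.1.1 * kgauss x.1.2 * kgauss (x.1.1 + x.2) * kgauss (x.1.2 + x.2).

Lemma theta_termE m n p :
  (Tq m n p)%:~R * expR (- (beta * (Rq m n p)%:~R)) = theta_term (m, n, p).
Proof.
rewrite /theta_term /kgauss /Tq /Rq /=.
have -> : - (beta * (m ^+ 2 + n ^+ 2 + p ^+ 2 + m * p + n * p)%:~R) =
  - (beta / 2 * (m ^+ 2)%:~R) + - (beta / 2 * (n ^+ 2)%:~R)
  + - (beta / 2 * ((m + p) ^+ 2)%:~R) + - (beta / 2 * ((n + p) ^+ 2)%:~R).
  by rewrite !(rmorphD, rmorphM) /=; field.
by rewrite !expRD !rmorphM /=; ring.
Qed.

Lemma theta_partialE N : theta_partial beta N = \sum_(x <- zbox N) theta_term x.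
Proof.
rewrite /theta_partial big_mkcond; apply: eq_bigr => -[[m n] p] _ /=.
case: eqP => [[-> -> ->]|_]; last by rewrite theta_termE.
by rewrite /theta_term /= kgauss0 !mul0r.
Qed.

Definition kgauss_conv (K : nat) (s : int) : R :=
  \sum_(m <- zrange K) kgauss m * kgauss (s - m).

Lemma sum_shear_box_theta_term K :
  \sum_(x <- shear_box K) theta_term x = \sum_(s <- zrange (3 * K)) kgauss_conv K s ^+ 2.
Proof.
rewrite big_map big_zcuboid; under eq_bigr do rewrite exchange_big.
rewrite exchange_big; apply: eq_bigr => s _; rewrite expr2 big_distrlr.
apply: eq_bigr => m _; apply: eq_bigr => n _; rewrite /theta_term /=.
have -> : m + (s - m - n) = s - n by ring.
have -> : n + (s - m - n) = s - m by ring.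
ring.
Qed.

Lemma kgauss_conv0_le K : (0 < K)%N -> kgauss_conv K 0 <= - kgauss 1 ^+ 2.
Proof.
move=> K_gt0; rewrite /kgauss_conv.
under eq_bigr do rewrite sub0r kgaussN mulrN -expr2.
rewrite sumrN lerN2 (bigD1_seq 1) ?zrange_uniq //=; last by rewrite mem_zrange; lia.
by rewrite lerDl sumr_ge0 // => k _; apply: sqr_ge0.
Qed.

Lemma sum_shear_box_theta_term_ge K : (0 < K)%N ->
  kgauss 1 ^+ 4 <= \sum_(x <- shear_box K) theta_term x.
Proof.
move=> K_gt0; rewrite sum_shear_box_theta_term (bigD1_seq 0) ?zrange_uniq //=;
  last by rewrite mem_zrange; lia.
apply: le_trans (_ : kgauss_conv K 0 ^+ 2 <= _); last first.
  by rewrite lerDl sumr_ge0 // => s _; apply: sqr_ge0.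
have conv0_le := kgauss_conv0_le K_gt0.
rewrite -sqrrN (_ : 4 = 2 * 2)%N // exprM ler_sqr ?nnegrE ?sqr_ge0 1?lerNr //.
by rewrite oppr0 (le_trans conv0_le) // oppr_le0 sqr_ge0.
Qed.

Hypothesis beta_gt0 : 0 < beta.

Lemma kgauss_decay (n : nat) : (0 < n)%N ->
  `|kgauss n| * (n%:R * n.+1%:R) <= 16 / beta ^+ 2.
Proof.
move=> n_gt0; have x_ge1 : 1 <= n%:R :> R by rewrite ler1n.
set x := n%:R : R in x_ge1 *; set E := expR (beta / 2 * x ^+ 2).
have E_gt0 : 0 < E := expR_gt0 _.
have kgaussE : kgauss n = x / E by rewrite /kgauss rmorphXn pmulrn expRN.
have E_ge : beta ^+ 2 * x ^+ 4 / 8 <= E.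
  apply: le_trans (sqr_le_expR _); last by rewrite mulr_ge0 ?divr_ge0 ?sqr_ge0 // ltW.
  by rewrite [X in _ <= X](_ : _ = beta ^+ 2 * x ^+ 4 / 8) //; field.
have beta2_gt0 : 0 < beta ^+ 2 by rewrite exprn_gt0.
rewrite kgaussE ger0_norm; last by apply: divr_ge0; lra.
rewrite -natr1 -/x mulrAC ler_pdivrMr //.
apply: (@le_trans _ _ (16 / beta ^+ 2 * (beta ^+ 2 * x ^+ 4 / 8))); last first.
  by rewrite ler_wpM2l // divr_ge0 // ltW.
rewrite (_ : 16 / _ * _ = 2 * x ^+ 4); last by field; rewrite gt_eqF.
rewrite -subr_ge0 (_ : _ - _ = x ^+ 2 * (x - 1) * (2 * x + 1)); last by ring.
by rewrite !mulr_ge0 ?sqr_ge0 //; lra.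
Qed.

Lemma sum_kgauss_abs_le L : \sum_(k <- zrange L) `|kgauss k| <= 32 / beta ^+ 2.
Proof.
rewrite big_zrange_sym kgauss0 normr0 add0r.
under eq_bigr do rewrite kgaussN normrN.
apply: le_trans (@sum_le_of_quadratic_decay _ _ (32 / beta ^+ 2) _ _) _.
  by move=> n /kgauss_decay; rewrite mulrDl; lra.
by rewrite gerBl divr_ge0 // divr_ge0 // exprn_ge0 // ltW.
Qed.

Lemma sum_kgauss_abs_subset (s : seq int) L : uniq s -> {subset s <= zrange L} ->
  \sum_(k <- s) `|kgauss k| <= 32 / beta ^+ 2.
Proof.
move=> s_uniq sub_s; apply: le_trans (sum_kgauss_abs_le L).
exact: ler_sum_subset (zrange_uniq L) sub_s _.
Qed.

Lemma kgauss_abs_le k : `|kgauss k| <= 32 / beta ^+ 2.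
Proof.
have := @sum_kgauss_abs_subset [:: k] `|k|%N isT; rewrite big_seq1; apply=> j.
by rewrite inE mem_zrange => /eqP ->; lia.
Qed.

Lemma sum_kgauss_abs_shift L m : \sum_(p <- zrange L) `|kgauss (m + p)| <= 32 / beta ^+ 2.
Proof.
rewrite -(big_map (+%R m) xpredT (fun k => `|kgauss k|)).
apply: (@sum_kgauss_abs_subset _ (L + `|m|)%N).
  by rewrite map_inj_uniq ?zrange_uniq // => i j /addrI.
by move=> k /mapP[p]; rewrite !mem_zrange => ? ->; lia.
Qed.

Lemma sum_theta_term_abs_le N :
  \sum_(x <- zbox N) `|theta_term x| <= (32 / beta ^+ 2) ^+ 4.
Proof.
have D_ge0 : 0 <= 32 / beta ^+ 2 by rewrite divr_ge0 // exprn_ge0 // ltW.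
move: D_ge0 (kgauss_abs_le) (sum_kgauss_abs_shift N) (sum_kgauss_abs_le N).
set D := 32 / beta ^+ 2; clearbody D => D_ge0 abs_le shift_le sum_le.
have sum_ge0 : 0 <= \sum_(k <- zrange N) `|kgauss k| by apply: sumr_ge0.
rewrite zboxE big_zcuboid.
apply: (@le_trans _ _ (\sum_(m <- zrange N) \sum_(n <- zrange N)
    `|kgauss m| * `|kgauss n| * D * D)).
  apply: ler_sum => m _; apply: ler_sum => n _.
  apply: (@le_trans _ _ (\sum_(p <- zrange N)
      `|kgauss m| * `|kgauss n| * D * `|kgauss (m + p)|)).
    apply: ler_sum => p _; rewrite /theta_term /= 3!normrM [X in _ <= X]mulrAC.
    by rewrite ler_wpM2l ?mulr_ge0.
  by rewrite -mulr_sumr ler_wpM2l ?mulr_ge0.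
under eq_bigr do rewrite -!mulr_suml -mulr_sumr.
rewrite -!mulr_suml (_ : D ^+ 4 = D * D * D * D); last by rewrite !exprS expr0 mulr1 !mulrA.
by rewrite !ler_pM ?mulr_ge0.
Qed.

End KGauss.

Local Open Scope classical_set_scope.

Theorem lemma5p2 (R : realType) (beta : R) (hbeta : 0 < beta) :
  exists S : R, theta_partial beta N @[N --> \oo] --> S /\ 0 < S.
Proof.
have abs_le := sum_theta_term_abs_le hbeta.
have theta_cvg := sum_box_is_cvgn zbox_uniq zbox_nested abs_le.
have abs_cvg := sum_box_abs_is_cvgn zbox_uniq zbox_nested abs_le.
rewrite -(funext (theta_partialE beta)) in theta_cvg.
set V := fun N => \sum_(x <- zbox N) `|theta_term beta x| in abs_cvg.
have mul5_cvg := @cvg_mulnl 5 isT.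
set S := lim (theta_partial beta @ \oo); exists S; split => //.
have G_cvg : (fun K => theta_partial beta (5 * K) + (V (5 * K) - V K)) @ \oo --> S.
  rewrite -[S]addr0 -(subrr (lim (V @ \oo))).
  apply: cvgD; first exact: cvg_comp mul5_cvg theta_cvg.
  by apply: cvgB => //; apply: cvg_comp mul5_cvg abs_cvg.
apply: lt_le_trans (exprn_gt0 4 (kgauss1_gt0 beta)) (cvgr_to_ge G_cvg _).
near=> K; have K_gt0 : (0 < K)%N by near: K; exact: nbhs_infty_gt.
have := sum_shear_box_theta_term_ge beta K_gt0.
have := dist_sum_box_le (theta_term beta) zbox_uniq (shear_box_uniq K)
  (@zbox_sub_shear_box K) (@shear_box_sub_zbox K).
rewrite theta_partialE ler_norml /V; lra.
Unshelve. all: end_near.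
Qed.
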